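(* For any $(m,n)$-Dyck path $\Pi$, $\operatorname{maxtdinv}(\Pi) = \operatorname{tdinv}(PF)$ where $PF$ is the parking function supported by $\Pi$ with $\sigma(PF) = n \, \dots \, 2 \, \, 1$. In particular, \[ \operatorname{maxtdinv}(\Pi) = \sum_{c,c'} \chi(\rank(c) < \rank(c') < \rank(c)+m) \] where the sum is over parking spaces $c,c'$ in $\Pi$.
   Context: Let $m,n$ be positive integers. An $(m,n)$-Dyck path $\Pi$ is a lattice path of north and east steps from $(0,0)$ to $(m,n)$ staying weakly above the line $y=\frac{n}{m}x$. The cells directly east of (and adjacent to) north steps of $\Pi$ are called parking spaces. An $(m,n)$-parking function $PF$ supported by $\Pi$ (written $\Pi(PF)=\Pi$) is obtained by filling the parking spaces with the labels (''cars'') $1,\dots,n$, each used once, so that labels increase up each column. For a lattice point, $\rank(x,y)=my-nx+\lfloor \frac{x\gcd(m,n)}{m}\rfloor$; the rank of a cell (or of the car in it) is the rank of its southwest corner. The word $\sigma(PF)$ lists the cars in order from highest to lowest rank. Define $\operatorname{tdinv}(PF)=\sum_{\text{cars } i<j}\chi(\rank(i)<\rank(j)<\rank(i)+m)$ and $\operatorname{maxtdinv}(\Pi)=\max\{\operatorname{tdinv}(PF):\Pi(PF)=\Pi\}$. Here $\chi$ is the indicator function. *)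

From mathcomp Require Import all_boot all_order all_algebra all_fingroup.
Unset Strict Implicit. Unset Printing Implicit Defensive.
Import Order.TTheory GRing.Theory Num.Theory.

(* A lattice path is a sequence of steps: true = north step, false = east step. *)

Definition pt_x (p : seq bool) (i : nat) : nat := count negb (take i p).
Definition pt_y (p : seq bool) (i : nat) : nat := count id (take i p).

(* (m,n)-Dyck path: from (0,0) to (m,n), weakly above y = (n/m) x,
   i.e. every lattice point (x,y) on the path satisfies n*x <= m*y. *)
Definition is_dyck (m n : nat) (p : seq bool) : bool :=
  [&& count negb p == m, count id p == n &
      all (fun i => n * pt_x p i <= m * pt_y p i) (iota 0 (size p).+1)].

Fixpoint north_xs (x : nat) (p : seq bool) : seq nat :=
  match p with
  | [::] => [::]
  | true :: p' => x :: north_xs x p'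
  | false :: p' => north_xs x.+1 p'
  end.

(* The parking space in row y (0-based) has southwest corner (space_x p y, y). *)
Definition space_x (p : seq bool) (y : nat) : nat := nth 0 (north_xs 0 p) y.

Definition rank (m n : nat) (x y : nat) : int :=
  ((m * y)%:Z - (n * x)%:Z + ((x * gcdn m n) %/ m)%:Z)%R.

Definition space_rank (m n : nat) (p : seq bool) (y : nat) : int :=
  rank m n (space_x p y) y.

(* A parking function supported by p: the filling f sending the parking space
   in row y : 'I_n to the car (f y) + 1 (cars 1..n are encoded as 'I_n,
   car k being encoded by k-1). *)
Definition is_pf (n : nat) (p : seq bool) (f : {perm 'I_n}) : bool :=
  [forall y : 'I_n, forall y' : 'I_n,
     ((y < y') && (space_x p y == space_x p y')) ==> (f y < f y')].

Definition car_rank (m n : nat) (p : seq bool) (f : {perm 'I_n}) (i : 'I_n) : int :=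
  space_rank m n p (f^-1 i)%g.

Definition sigma (m n : nat) (p : seq bool) (f : {perm 'I_n}) : seq nat :=
  map (fun i : 'I_n => (i : nat).+1)
      (sort (fun i j => (car_rank m n p f j <= car_rank m n p f i)%R) (enum 'I_n)).

Definition tdinv (m n : nat) (p : seq bool) (f : {perm 'I_n}) : nat :=
  \sum_(i : 'I_n) \sum_(j : 'I_n | i < j)
     ((car_rank m n p f i < car_rank m n p f j)%R &&
      (car_rank m n p f j < car_rank m n p f i + m%:Z)%R : nat).

Definition maxtdinv (m n : nat) (p : seq bool) : nat :=
  \max_(f : {perm 'I_n} | is_pf n p f) tdinv m n p f.

From mathcomp Require Import all_boot all_order all_algebra all_fingroup.
From mathcomp Require Import zify.
Import Order.TTheory GRing.Theory Num.Theory.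

Set Implicit Arguments.
Unset Strict Implicit.

(* Parking spaces lie in columns [x < m], where rank is injective, so distinct
   spaces have distinct ranks.  For any parking function, tdinv counts the pairs
   of cars [i < j] whose spaces [c, c'] satisfy [rank c < rank c' < rank c + m],
   hence it is at most the number of such ordered pairs of spaces.  Labelling the
   spaces by increasing rank is a parking function (rank increases up a column)
   whose word is [n ... 2 1] and which attains the bound; conversely the word
   [n ... 2 1] forces car ranks to increase with the labels, so every parking
   function with that word attains it. *)

Lemma coprime_divn_gcd m n :
  0 < gcdn m n -> coprime (m %/ gcdn m n) (n %/ gcdn m n).
Proof.
move=> g_gt0; rewrite /coprime -(eqn_pmul2r g_gt0) muln_gcdl mul1n.
by rewrite !divnK ?dvdn_gcdl ?dvdn_gcdr.
Qed.

Lemma eqn_modMl_coprime k a x y :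
  coprime k a -> (a * x == a * y %[mod k]) = (x == y %[mod k]).
Proof.
move=> co_ka; wlog le_yx : x y / y <= x.
  move=> IH; case/orP: (leq_total y x) => [/IH//|/IH].
  by rewrite eq_sym => ->; rewrite eq_sym.
by rewrite !eqn_mod_dvd ?leq_mul2l ?le_yx ?orbT // -mulnBr Gauss_dvdr.
Qed.

Section Rank.

Variables m n : nat.
Hypothesis m_gt0 : 0 < m.

Let d := gcdn m n.
Let m1 := m %/ d.
Let n1 := n %/ d.

(* For [x < m], [rank m n x y = (m1 y - n1 x) d + x %/ m1] with [x %/ m1 < d]:
   division by [d] recovers [m1 y - n1 x] and [x %/ m1]; coprimality of [m1] and
   [n1] then recovers [x %% m1]. *)
Lemma rank_inj x y x' y' : x < m -> x' < m ->
  rank m n x y = rank m n x' y' -> x = x' /\ y = y'.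
Proof.
have d_gt0 : 0 < d by rewrite gcdn_gt0 m_gt0.
have Em : m = m1 * d by rewrite divnK // dvdn_gcdl.
have En : n = n1 * d by rewrite divnK // dvdn_gcdr.
have m1_gt0 : 0 < m1 by move: m_gt0; rewrite Em muln_gt0 => /andP[].
have floorE z : z * d %/ m = z %/ m1 by rewrite {1}Em divnMr.
have floor_lt z : z < m -> z %/ m1 < d by rewrite ltn_divLR // mulnC -Em.
move=> xm x'm; rewrite /rank -/d !floorE => E.
have {}E : (m1 * y + n1 * x') * d + x %/ m1 = (m1 * y' + n1 * x) * d + x' %/ m1.
  rewrite !mulnDl -!mulnA ![_ * d]mulnC !mulnA -Em -En; lia.
move: (congr1 (edivn^~ d) E); rewrite !edivn_eq ?floor_lt // => -[core eq_q].
have eq_x : x = x'.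
  rewrite (divn_eq x m1) (divn_eq x' m1) eq_q; congr (_ + _); apply/eqP.
  have co : coprime m1 n1 := coprime_divn_gcd d_gt0.
  rewrite -(eqn_modMl_coprime x x' co) eq_sym.
  by move: (congr1 (modn^~ m1) core) => /=; rewrite ![m1 * _]mulnC !modnMDl => ->.
split=> //; move: core; rewrite eq_x => /addIn /eqP.
by rewrite eqn_pmul2l // => /eqP.
Qed.

End Rank.

Lemma north_xs_pt p x0 y : y < count id p ->
  exists2 i, i <= size p & pt_y p i = y /\ x0 + pt_x p i = nth 0 (north_xs x0 p) y.
Proof.
elim: p x0 y => [|[] p IH] x0 y //=.
- case: y => [_|y /(IH x0)[i le_ip [yi xi]]].
    by exists 0; rewrite /pt_y /pt_x /= ?addn0.
  by exists i.+1; rewrite //= -xi -yi /pt_y /pt_x /= add0n.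
- move=> /(IH x0.+1)[i le_ip [yi xi]].
  by exists i.+1; rewrite //= -xi -yi /pt_y /pt_x /= add0n; split=> //; lia.
Qed.

Lemma space_x_lt m n p y : 0 < m -> is_dyck m n p -> y < n -> space_x p y < m.
Proof.
move=> m_gt0 /and3P[_ /eqP cnt_n /allP above] lt_yn.
have [i le_ip [yi xi]] := north_xs_pt 0 (leq_trans lt_yn (eq_leq (esym cnt_n))).
have := above i; rewrite mem_iota ltnS le_ip yi => /(_ isT) le_nx_my.
have n_gt0 : 0 < n := leq_ltn_trans (leq0n y) lt_yn.
rewrite /space_x -xi add0n -(ltn_pmul2l n_gt0) (leq_ltn_trans le_nx_my) //.
by rewrite [n * m]mulnC ltn_pmul2l.
Qed.

Lemma space_rank_inj m n p : 0 < m -> is_dyck m n p ->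
  injective (fun y : 'I_n => space_rank m n p y).
Proof.
move=> m_gt0 D y y' eq_r.
have x_lt (z : 'I_n) := space_x_lt m_gt0 D (ltn_ord z).
by have [_ /val_inj] := rank_inj m_gt0 (x_lt y) (x_lt y') eq_r.
Qed.

Lemma space_rank_lt_column m n p y y' : 0 < m ->
  space_x p y = space_x p y' -> y < y' -> (space_rank m n p y < space_rank m n p y')%R.
Proof.
move=> m_gt0 col lt_yy'; rewrite /space_rank /rank col.
have : m * y < m * y' by rewrite ltn_pmul2l.
lia.
Qed.

(* [f y] is the number of [z] with [r z < r y]. *)
Lemma ranking_perm disp (T : orderType disp) n (r : 'I_n -> T) :
  injective r -> exists f : {perm 'I_n}, forall y y', (f y < f y') = (r y < r y')%O.
Proof.
move=> r_inj; pose below y := [set z | (r z < r y)%O].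
have below_lt y : #|below y| < n.
  rewrite -[n in _ < n]card_ord -cardsT; apply/proper_card/properP.
  by split; [exact: subsetT | exists y; rewrite ?inE ?ltxx].
have below_mono y y' : (#|below y| < #|below y'|) = (r y < r y')%O.
  case: (boolP (r y < r y')%O) => lt_rr'.
    apply/proper_card/properP; split; last by exists y; rewrite !inE ?lt_rr' ?ltxx.
    by apply/subsetP => z; rewrite !inE => /lt_trans; apply.
  apply/negbTE; rewrite -leqNgt; apply/subset_leq_card/subsetP => z; rewrite !inE.
  by move/lt_le_trans; apply; rewrite leNgt.
pose g y := Ordinal (below_lt y).
have g_inj : injective g.
  move=> y y' /(congr1 val) /= eq_b; apply/r_inj/eqP.
  by rewrite eq_le !leNgt -!below_mono eq_b ltnn.
by exists (perm g_inj) => y y'; rewrite !permE /= below_mono.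
Qed.

Lemma exists_rank_sorted_pf m n p : 0 < m -> is_dyck m n p ->
  exists f : {perm 'I_n}, is_pf n p f /\
    {homo car_rank m n p f : i j / i < j >-> (i < j)%R}.
Proof.
move=> m_gt0 D; have [f lt_f] := ranking_perm (space_rank_inj m_gt0 D).
exists f; split.
- apply/forallP => y; apply/forallP => y'; apply/implyP => /andP[lt_yy' /eqP col].
  by rewrite lt_f space_rank_lt_column.
- by move=> i j lt_ij; rewrite /car_rank -lt_f !permKV.
Qed.

Section SortByDecreasingKey.

Variables (disp : Order.disp_t) (T : orderType disp) (n : nat) (r : 'I_n -> T).

Let ge_key := fun i j : 'I_n => (r j <= r i)%O.

Lemma sort_ge_key_enum_ord : {homo r : i j / i < j >-> (i < j)%O} ->
  sort ge_key (enum 'I_n) = rev (enum 'I_n).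
Proof.
move=> r_lt; apply: (@sorted_eq _ ge_key).
- by move=> a b c le_ba le_cb; exact: le_trans le_cb le_ba.
- move=> a b; rewrite /ge_key => /andP[le_ba le_ab]; apply: val_inj.
  have [/r_lt|/r_lt|//] := ltngtP a b; by rewrite ltNge ?le_ab ?le_ba.
- by apply: sort_sorted => a b; exact: le_total.
- rewrite rev_sorted; apply: (@sub_sorted _ (relpre val ltn)) => [a b /r_lt/ltW //|].
  by rewrite -sorted_map val_enum_ord iota_ltn_sorted.
- by rewrite perm_sort perm_sym perm_rev.
Qed.

Lemma sort_ge_key_enum_ord_homo : sort ge_key (enum 'I_n) = rev (enum 'I_n) ->
  {homo r : i j / i < j >-> (i <= j)%O}.
Proof.
move=> sort_rev i j lt_ij.
have := sort_sorted (fun a b => le_total (r b) (r a)) (enum 'I_n).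
rewrite -/ge_key sort_rev rev_sorted => sorted_r.
have le_trans_r : transitive (fun a b : 'I_n => (r a <= r b)%O).
  by move=> a b c; exact: le_trans.
have := sorted_ltn_nth le_trans_r i sorted_r i j.
by rewrite !nth_ord_enum !inE size_enum_ord !ltn_ord; apply.
Qed.

End SortByDecreasingKey.

Lemma eq_sigma_rev m n p (f : {perm 'I_n}) :
  (sigma m n p f == rev (iota 1 n)) =
  (sort (fun i j => (car_rank m n p f j <= car_rank m n p f i)%R) (enum 'I_n)
     == rev (enum 'I_n)).
Proof.
have succ_inj : injective (fun i : 'I_n => (i : nat).+1) by move=> i j [/val_inj].
have -> : iota 1 n = map (fun i : 'I_n => (i : nat).+1) (enum 'I_n).
  by rewrite (map_comp succn val) val_enum_ord (iotaDl 1 0).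
by rewrite -map_rev /sigma (inj_eq (inj_map succ_inj)).
Qed.

Definition spaces_tdinv (m n : nat) (p : seq bool) : nat :=
  \sum_(c : 'I_n) \sum_(c' : 'I_n)
    ((space_rank m n p c < space_rank m n p c')%R &&
     (space_rank m n p c' < space_rank m n p c + m%:Z)%R : nat).

Section TdinvBound.

Variables (m n : nat) (p : seq bool) (f : {perm 'I_n}).

Local Notation cr := (car_rank m n p f).

Lemma spaces_tdinv_car_rank : spaces_tdinv m n p =
  \sum_(i : 'I_n) \sum_(j : 'I_n) ((cr i < cr j)%R && (cr j < cr i + m%:Z)%R : nat).
Proof.
rewrite /spaces_tdinv (reindex_inj (@perm_inj _ f^-1)%g); apply: eq_bigr => i _.
by rewrite (reindex_inj (@perm_inj _ f^-1)%g).
Qed.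

Lemma tdinv_le_spaces : tdinv m n p f <= spaces_tdinv m n p.
Proof.
rewrite spaces_tdinv_car_rank; apply: leq_sum => i _.
by rewrite [X in _ <= X](bigID (fun j : 'I_n => i < j)) leq_addr.
Qed.

Lemma tdinv_spaces : {homo cr : i j / i < j >-> (i <= j)%R} ->
  tdinv m n p f = spaces_tdinv m n p.
Proof.
move=> cr_le; rewrite spaces_tdinv_car_rank; apply: eq_bigr => i _.
rewrite [RHS](bigID (fun j : 'I_n => i < j)) [X in _ = _ + X]big1 ?addn0 // => j.
rewrite -leqNgt leq_eqVlt => /orP[/eqP/val_inj -> | /cr_le le_ji].
  by rewrite ltxx.
by rewrite ltNge le_ji.
Qed.

End TdinvBound.

Lemma maxtdinv_spaces m n p : 0 < m -> is_dyck m n p ->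
  maxtdinv m n p = spaces_tdinv m n p.
Proof.
move=> m_gt0 D; have [f [pf_f cr_lt]] := exists_rank_sorted_pf m_gt0 D.
apply/eqP; rewrite eqn_leq; apply/andP; split.
  by apply/bigmax_leqP => g _; exact: tdinv_le_spaces.
rewrite -(tdinv_spaces (f := f)) => [|i j /cr_lt/ltW //].
exact: (leq_bigmax_cond (P := is_pf n p)).
Qed.

Unset Implicit Arguments.

Theorem lemma1 (m n : nat) (p : seq bool) :
  0 < m -> 0 < n -> is_dyck m n p ->
  (exists f : {perm 'I_n}, is_pf n p f /\ sigma m n p f = rev (iota 1 n)) /\
  (forall f : {perm 'I_n}, is_pf n p f -> sigma m n p f = rev (iota 1 n) ->
     maxtdinv m n p = tdinv m n p f) /\
  maxtdinv m n p =
    \sum_(c : 'I_n) \sum_(c' : 'I_n)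
      ((space_rank m n p c < space_rank m n p c')%R &&
       (space_rank m n p c' < space_rank m n p c + m%:Z)%R : nat).
Proof.
move=> m_gt0 _ D; have max_eq := maxtdinv_spaces m_gt0 D.
split; last split=> //.
- have [f [pf_f cr_lt]] := exists_rank_sorted_pf m_gt0 D.
  exists f; split=> //; apply/eqP.
  by rewrite eq_sigma_rev sort_ge_key_enum_ord.
- move=> f _ /eqP; rewrite eq_sigma_rev => /eqP/sort_ge_key_enum_ord_homo cr_le.
  by rewrite max_eq tdinv_spaces.
Qed.
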